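(* Let $(C,\mathfrak p,\mathfrak d)$ be a regular $q$-cycle coalgebra with $\mathfrak p_{11}^1\ne0$. Then $\mathfrak d_{i+e,0}^i=\mathfrak p_{i+e,0}^i=0$ for all $i\ge0$ and $e>0$ with $i+e\le n-1$.
   Context: $K$ is an algebraically closed field of characteristic $0$ and $n\ge2$. $C$ is the coalgebra dual to $K[y]/\langle y^n\rangle$: basis $x_0,\dots,x_{n-1}$, $\Delta(x_i)=\sum_{j+k=i}x_j\otimes x_k$, $\epsilon(x_i)=\delta_{i0}$; $C\otimes C$ has the tensor product coalgebra structure; Sweedler notation $\Delta(b)=b_{(1)}\otimes b_{(2)}$. For linear maps $\mathfrak p,\mathfrak d\colon C\otimes C\to C$ write $a\cdot b=\mathfrak p(a\otimes b)$, $a:b=\mathfrak d(a\otimes b)$, $\mathfrak p(x_i\otimes x_j)=\sum_{k=0}^{n-1}\mathfrak p_{ij}^kx_k$, $\mathfrak d(x_i\otimes x_j)=\sum_{k=0}^{n-1}\mathfrak d_{ij}^kx_k$. A triple $(C,\mathfrak p,\mathfrak d)$ with $\mathfrak p,\mathfrak d$ coalgebra morphisms is a regular $q$-magma coalgebra if there are coalgebra morphisms $a\otimes b\mapsto a^b$, $a\otimes b\mapsto a_b$ from $C\otimes C$ to $C$ with $a^{b_{(1)}}\cdot b_{(2)}=(a\cdot b_{(1)})^{b_{(2)}}=\epsilon(b)a$ and $(a:b_{(2)})_{b_{(1)}}=a_{b_{(2)}}:b_{(1)}=\epsilon(b)a$. It is a regular $q$-cycle coalgebra if moreover for all $a,b,c$: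 (1) $(a\cdot b_{(1)})\cdot(c:b_{(2)})=(a\cdot c_{(2)})\cdot(b\cdot c_{(1)})$; (2) $(a\cdot b_{(1)}):(c\cdot b_{(2)})=(a:c_{(2)})\cdot(b:c_{(1)})$; (3) $(a:b_{(1)}):(c:b_{(2)})=(a:c_{(2)}):(b\cdot c_{(1)})$. *)

From HB Require Import structures.
From mathcomp Require Import all_boot all_order all_algebra.
Set Implicit Arguments. Unset Strict Implicit. Unset Printing Implicit Defensive.
Import GRing.Theory.
Local Open Scope ring_scope.

(* The coalgebra C dual to K[y]/<y^n>: elements are row vectors 'rV[K]_n,
   coordinates w.r.t. the basis x_0,...,x_{n-1}.
   C (x) C is represented by 'M[K]_n: entry (u,v) = coefficient of x_u (x) x_v. *)

Section QCycle.
Variables (K : fieldType) (n : nat).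

Definition xb (i : 'I_n) : 'rV[K]_n := delta_mx 0 i.

Definition eps (b : 'rV[K]_n) : K := \sum_(i < n | val i == 0%N) b 0 i.

Definition DeltaC (c : 'rV[K]_n) : 'M[K]_n :=
  \sum_(k < n) c 0 k *: \sum_(u < n) \sum_(v < n | (u + v == k)%N) delta_mx u v.

Definition tens (u v : 'rV[K]_n) : 'M[K]_n := u^T *m v.

(* the linear map C (x) C -> C with structure constants f i j k, i.e.
   f(x_i (x) x_j) = sum_k f i j k x_k, applied to u (x) v *)
Definition bil (f : 'I_n -> 'I_n -> 'I_n -> K) (u v : 'rV[K]_n) : 'rV[K]_n :=
  \sum_(i < n) \sum_(j < n) (u 0 i * v 0 j) *: \row_(k < n) f i j k.

(* Sweedler sum: for F bilinear, sw b F = F(b_(1), b_(2)) *)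
Definition sw (b : 'rV[K]_n) (F : 'rV[K]_n -> 'rV[K]_n -> 'rV[K]_n) : 'rV[K]_n :=
  \sum_(j < n) b 0 j *:
     \sum_(s < n) \sum_(t < n | (s + t == j)%N) F (xb s) (xb t).

(* f : C (x) C -> C is a coalgebra morphism (C (x) C with the tensor product
   coalgebra structure), checked on the basis x_i (x) x_j *)
Definition coalg_mor (f : 'I_n -> 'I_n -> 'I_n -> K) : Prop :=
  forall i j : 'I_n,
    DeltaC (bil f (xb i) (xb j)) =
      \sum_(a < n) \sum_(b < n | (a + b == i)%N)
       \sum_(c < n) \sum_(d < n | (c + d == j)%N)
          tens (bil f (xb a) (xb c)) (bil f (xb b) (xb d))
    /\ eps (bil f (xb i) (xb j)) = eps (xb i) * eps (xb j).

Definition regular_qmagma (p d : 'I_n -> 'I_n -> 'I_n -> K) : Prop :=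
  coalg_mor p /\ coalg_mor d /\
  exists up lo : 'I_n -> 'I_n -> 'I_n -> K,
    coalg_mor up /\ coalg_mor lo /\
    forall a b : 'rV[K]_n,
      sw b (fun b1 b2 => bil p (bil up a b1) b2) = eps b *: a /\
      sw b (fun b1 b2 => bil up (bil p a b1) b2) = eps b *: a /\
      sw b (fun b1 b2 => bil lo (bil d a b2) b1) = eps b *: a /\
      sw b (fun b1 b2 => bil d (bil lo a b2) b1) = eps b *: a.

Definition regular_qcycle (p d : 'I_n -> 'I_n -> 'I_n -> K) : Prop :=
  regular_qmagma p d /\
  forall a b c : 'rV[K]_n,
    sw b (fun b1 b2 => bil p (bil p a b1) (bil d c b2)) =
      sw c (fun c1 c2 => bil p (bil p a c2) (bil p b c1)) /\
    sw b (fun b1 b2 => bil d (bil p a b1) (bil p c b2)) =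
      sw c (fun c1 c2 => bil p (bil d a c2) (bil d b c1)) /\
    sw b (fun b1 b2 => bil d (bil d a b1) (bil d c b2)) =
      sw c (fun c1 c2 => bil d (bil d a c2) (bil p b c1)).

End QCycle.

From mathcomp Require Import all_boot all_order all_algebra.
From mathcomp Require Import zify ring.
Set Implicit Arguments. Unset Strict Implicit. Unset Printing Implicit Defensive.
Import GRing.Theory.
Local Open Scope ring_scope.

(* Let R_f(c) be the matrix of v |-> f(v (x) x_c), and write alpha_f = f_{10}^1,
   beta_f = f_{01}^1.  Comparing coefficients in the coalgebra-morphism identity
   shows that f(x_i (x) x_j) has no x_k-component for k > i + j and top
   coefficient binom(i+j, i) alpha_f^i beta_f^j; at i + j = n this coefficient
   must vanish, so n alpha_f beta_f^(n-1) = 0.  Regularity makes alpha_p and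
   alpha_d invertible, hence beta_p = beta_d = 0 in characteristic 0, and then
   R_f(0), R_p(1) are triangular with diagonals alpha_f^k and
   k alpha_p^(k-1) p_{11}^1.  The first two cycle axioms at b = x_1, c = x_0 read
   R_p(1) R_f(0) = alpha_f R_f(0) R_p(1) for f = p, d; the (1,1) entries give
   alpha_f = 1, and a triangular matrix with constant diagonal commuting with a
   triangular matrix with distinct diagonal entries is diagonal.  The
   off-diagonal entries of R_f(0) are the f_{j0}^i. *)

Lemma big_ord_only1 (V : nmodType) n (G : 'I_n -> V) t :
  (forall a, a != t -> G a = 0) -> \sum_a G a = G t.
Proof. by move=> G0; rewrite (bigD1 t) //= big1 ?addr0 // => a /G0. Qed.

Lemma big_ord_two (V : nmodType) n (F : 'I_n -> V) (i j : 'I_n) : i != j ->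
  (forall k, k != i -> k != j -> F k = 0) -> \sum_k F k = F i + F j.
Proof.
move=> ne_ij F0; rewrite (bigD1 i) // (bigD1 j) 1?eq_sym //= big1 ?addr0 //.
by move=> k /andP[]; exact: F0.
Qed.

Lemma sum_antidiagonal (V : nmodType) N (G : nat -> nat -> V) i : (i < N)%N ->
  \sum_(a < N) \sum_(b < N | (a + b == i)%N) G a b = \sum_(a < i.+1) G a (i - a)%N.
Proof.
move=> lt_iN.
have inner (a : 'I_N) : \sum_(b < N | (a + b == i)%N) G a b =
    if (a <= i)%N then G a (i - a)%N else 0.
  case: ifP => le_ai; last by rewrite big_pred0 // => b; apply/eqP; lia.
  have lt_iaN : (i - a < N)%N by lia.
  by rewrite (big_pred1 (Ordinal lt_iaN)) //= => b /=; rewrite -val_eqE /=; apply/eqP/eqP; lia.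
rewrite (eq_bigr _ (fun a _ => inner a)).
rewrite -(big_mkord xpredT (fun a => if (a <= i)%N then G a (i - a)%N else 0)).
rewrite -[RHS](big_mkord xpredT (fun a => G a (i - a)%N)).
rewrite (big_cat_nat _ (n := i.+1)) //= [X in _ + X]big1_seq ?addr0.
  by apply: eq_big_nat => a /andP[_ lt_ai]; rewrite ltnS in lt_ai; rewrite lt_ai.
by move=> a /andP[_]; rewrite mem_index_iota => /andP[lt_ia _]; rewrite leqNgt lt_ia.
Qed.

Lemma pchar0_natr_inj (R : idomainType) : [pchar R] =i pred0 ->
  injective (fun k : nat => k%:R : R).
Proof.
move=> /pcharf0P charR0; suff le_natr k l : (k <= l)%N -> k%:R = l%:R :> R -> l = k.
  by move=> k l kl; case: (leqP k l) => [/le_natr/(_ kl)|/ltnW/le_natr/(_ (esym kl))].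
move=> le_kl /esym/eqP; rewrite -subr_eq0 -natrB // charR0 subn_eq0 => le_lk.
by apply/eqP; rewrite eqn_leq le_lk.
Qed.

Section TriangularMatrices.
Variables (R : idomainType) (n : nat).
Implicit Types A B : 'M[R]_n.

Lemma trig_mulmx_diag A B i : is_trig_mx A -> is_trig_mx B ->
  (A *m B) i i = A i i * B i i.
Proof.
move=> /is_trig_mxP A_trig /is_trig_mxP B_trig.
rewrite mxE (bigD1 i) //= big1 ?addr0 // => k ne_ki.
case: (ltngtP i k) => [/A_trig->|/B_trig->|/val_inj eq_ik]; rewrite ?mul0r ?mulr0 //.
by rewrite eq_ik eqxx in ne_ki.
Qed.

Lemma trig_scaled_commute_eq1 A B w i : is_trig_mx A -> is_trig_mx B ->
  A *m B = w *: (B *m A) -> A i i * B i i != 0 -> w = 1.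
Proof.
move=> A_trig B_trig AB nz; have := congr1 (fun M : 'M_n => M i i) AB.
rewrite /= [in RHS]mxE !trig_mulmx_diag // [B i i * _]mulrC -{1}[A i i * _]mul1r => /eqP.
by rewrite -subr_eq0 -mulrBl mulf_eq0 (negbTE nz) orbF subr_eq0 => /eqP.
Qed.

Lemma trig_commute_is_diag A B : is_trig_mx A -> is_trig_mx B -> A *m B = B *m A ->
  (forall i j, A i i = A j j) -> (forall i j, B i i = B j j -> i = j) ->
  is_diag_mx A.
Proof.
move=> /is_trig_mxP A_trig /is_trig_mxP B_trig AB A_const B_inj.
suff A_low d : forall i j : 'I_n, (i - j <= d)%N -> (j < i)%N -> A i j = 0.
  apply/is_diag_mxP => i j; case: (ltngtP i j) => [/A_trig //|lt_ji _|/val_inj-> //].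
  exact: (A_low (i - j)%N).
elim: d => [|d IH] i j le_d lt_ji; first by lia.
have ne_ij : i != j by rewrite -val_eqE /= neq_ltn lt_ji orbT.
have := congr1 (fun M : 'M_n => M i j) AB; rewrite /= !mxE.
rewrite (big_ord_two ne_ij) => [|k ne_ki ne_kj]; last first.
  case: (ltngtP i k) => [/A_trig->|lt_ki|/val_inj eq_ik]; rewrite ?mul0r //.
    case: (ltngtP j k) => [lt_jk|/B_trig->|/val_inj eq_jk]; rewrite ?mulr0 //.
      by rewrite (IH i k) ?mul0r //; lia.
    by rewrite eq_jk eqxx in ne_kj.
  by rewrite eq_ik eqxx in ne_ki.
rewrite (big_ord_two ne_ij) => [|k ne_ki ne_kj]; last first.
  case: (ltngtP i k) => [/B_trig->|lt_ki|/val_inj eq_ik]; rewrite ?mul0r //.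
    case: (ltngtP j k) => [lt_jk|/A_trig->|/val_inj eq_jk]; rewrite ?mulr0 //.
      by rewrite (IH k j) ?mulr0 //; lia.
    by rewrite eq_jk eqxx in ne_kj.
  by rewrite eq_ik eqxx in ne_ki.
move=> e; have : A i j * (B j j - B i i) = 0.
  transitivity (A i i * B i j + A i j * B j j - (B i i * A i j + B i j * A j j)).
    by rewrite (A_const i j); ring.
  by rewrite e subrr.
move/eqP; rewrite mulf_eq0 subr_eq0 => /orP[/eqP //|/eqP/B_inj eq_ji].
by rewrite eq_ji eqxx in ne_ij.
Qed.

End TriangularMatrices.

(* [F i j k] stands for f_{ij}^k, extended by 0 to all naturals; [coef_comul]
   compares the coefficients of x_k (x) x_l in the coalgebra-morphism identity. *)
Record coalg_mor_coef (K : fieldType) (n : nat) (F : nat -> nat -> nat -> K) : Prop :=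
  CoalgMorCoef {
    coef_comul : forall i j k l, (i < n)%N -> (j < n)%N -> (k < n)%N -> (l < n)%N ->
      F i j (k + l)%N = \sum_(a < i.+1) \sum_(c < j.+1) F a c k * F (i - a)%N (j - c)%N l;
    coef_counit : forall i j, F i j 0 = ((i == 0) && (j == 0))%:R;
    coef_out : forall i j k, (n <= k)%N -> F i j k = 0 }.

Section CoalgMorCoef.
Variables (K : fieldType) (n : nat) (F : nat -> nat -> nat -> K).
Hypothesis HF : coalg_mor_coef n F.
Local Notation alpha := (F 1 0 1).
Local Notation beta := (F 0 1 1).

Lemma coef001_eq0 : F 0 0 1 = 0.
Proof.
have [le_n1|lt_1n] := leqP n 1; first exact: (coef_out HF).
(* f(x_0 (x) x_0) is group-like, so its coefficients are powers; x_n = 0. *)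
have pow k : (k <= n)%N -> F 0 0 k = F 0 0 1 ^+ k.
  elim: k => [|k IH] le_kn; first by rewrite (coef_counit HF).
  rewrite -addn1 (coef_comul HF) //; try lia.
  by rewrite !big_ord1 /= IH 1?ltnW // addn1 exprSr.
have := pow n (leqnn n); rewrite (coef_out HF) // => /esym/eqP.
by rewrite expf_eq0 => /andP[_ /eqP].
Qed.

Lemma coef_eq0_lt i j k : (i + j < k)%N -> F i j k = 0.
Proof.
elim: k i j => [|k IH] i j lt_ijk //.
have [le_nk|lt_kn] := leqP n k.+1; first exact: (coef_out HF).
rewrite -addn1 (coef_comul HF) //; try lia.
apply: big1 => a _; apply: big1 => c _.
have [lt_ack|le_kac] := ltnP (a + c) k; first by rewrite IH ?mul0r.
have [-> ->] : (i - a = 0 /\ j - c = 0)%N by have := ltn_ord a; have := ltn_ord c; lia.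
by rewrite coef001_eq0 mulr0.
Qed.

Lemma coef_pascal i j k : (i < n)%N -> (j < n)%N -> (k < n)%N -> (i + j = k.+1)%N ->
  F i j k.+1 = (if i is i'.+1 then F i' j k * alpha else 0)
             + (if j is j'.+1 then F i j' k * beta else 0).
Proof.
move=> lt_in lt_jn lt_kn ijk.
rewrite -addn1 (coef_comul HF) //; try lia.
rewrite big_ord_recr /= subnn big_ord_recr /= subnn coef001_eq0 mulr0 addr0.
have -> : \sum_(a < i) \sum_(c < j.+1) F a c k * F (i - a)%N (j - c)%N 1 =
          \sum_(a < i) F a j k * F (i - a)%N 0 1.
  apply: eq_bigr => a _; rewrite big_ord_recr /= subnn big1 ?add0r // => c _.
  by rewrite coef_eq0_lt ?mul0r //; have := ltn_ord a; have := ltn_ord c; lia.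
have -> : \sum_(a < i) F a j k * F (i - a)%N 0 1 =
          if i is i'.+1 then F i' j k * alpha else 0.
  case: i ijk {lt_in} => [|i] ijk; first by rewrite big_ord0.
  rewrite big_ord_recr /= subSnn big1 ?add0r // => a _.
  by rewrite coef_eq0_lt ?mul0r //; have := ltn_ord a; lia.
case: j ijk {lt_jn} => [|j] ijk; first by rewrite big_ord0.
rewrite big_ord_recr /= subSnn big1 ?add0r // => c _.
by rewrite coef_eq0_lt ?mul0r //; have := ltn_ord c; lia.
Qed.

Lemma coef_binomial k i j : (i + j = k)%N -> (i < n)%N -> (j < n)%N -> (k <= n)%N ->
  F i j k = 'C(k, i)%:R * alpha ^+ i * beta ^+ j.
Proof.
elim: k i j => [|k IH] i j ijk lt_in lt_jn le_kn.
  have [-> ->] : i = 0%N /\ j = 0%N by lia.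
  by rewrite (coef_counit HF) !mulr1.
rewrite coef_pascal //.
case: i ijk lt_in => [|i] ijk lt_in; case: j ijk lt_jn => [|j] ijk lt_jn //=.
- by rewrite IH ?bin0 ?add0r ?exprSr ?mulrA //; lia.
- have -> : i = k by lia.
  by rewrite IH ?addn0 ?binn ?exprSr ?(ltnW le_kn) //; ring.
rewrite !IH; try lia.
by rewrite binS natrD !exprS; ring.
Qed.

Lemma coef_beta_eq0 : n%:R != 0 :> K -> alpha != 0 -> beta = 0.
Proof.
move=> n_nz alpha_nz; have [le_n1|lt_1n] := leqP n 1; first exact: (coef_out HF).
have := coef_binomial (k := n) (i := 1) (j := n.-1).
rewrite (coef_out HF) // bin1 expr1 => /(_ ltac:(lia) lt_1n ltac:(lia) (leqnn n)).
move/esym/eqP; rewrite !mulf_eq0 (negbTE n_nz) (negbTE alpha_nz) expf_eq0 /=.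
by move=> /andP[_ /eqP].
Qed.

Lemma coef_diag0 k : (k < n)%N -> F k 0 k = alpha ^+ k.
Proof.
by move=> lt_kn; rewrite (coef_binomial (i := k) (j := 0)) ?addn0 ?binn ?mulr1 ?mul1r //; lia.
Qed.

Hypothesis beta0 : beta = 0.

Lemma coef_below_diag1 a k : (a < k)%N -> F a 1 k = 0.
Proof.
move=> lt_ak; have [lt_a1k|le_ka1] := ltnP (a + 1) k; first exact: coef_eq0_lt.
have [le_nk|lt_kn] := leqP n k; first exact: (coef_out HF).
by rewrite (coef_binomial (i := a) (j := 1)) ?beta0 ?expr1 ?mulr0 //; lia.
Qed.

Lemma coef_diag1 k : (k < n)%N -> F k 1 k = k%:R * alpha ^+ k.-1 * F 1 1 1.
Proof.
elim: k => [|k IH] lt_kn; first by rewrite (coef_counit HF) !mul0r.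
have := coef_comul HF (i := k.+1) (j := 1) (k := k) (l := 1).
rewrite addn1 => -> //; try lia.
rewrite big_ord_recr /= subnn !big_ord_recr !big_ord0 /= !add0r subSnn subn0 subnn.
rewrite coef001_eq0 beta0 !mulr0 !addr0 big1 ?add0r => [|a _]; last first.
  rewrite !big_ord_recr big_ord0 /= add0r subn0 subnn.
  have lt_ak := ltn_ord a.
  by rewrite (coef_eq0_lt (i := a) (j := 0)) ?(coef_below_diag1 (a := a)) ?mul0r ?add0r ?addn0.
rewrite coef_diag0 ?IH; try lia.
case: k {IH lt_kn} => [|k]; first by rewrite !mul0r addr0 mulr1.
by rewrite [k.+2%:R]mulrS !exprS; ring.
Qed.

End CoalgMorCoef.

Section Coordinates.
Variables (K : fieldType) (m : nat).
Local Notation N := m.+1.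
Implicit Types f : 'I_N -> 'I_N -> 'I_N -> K.

Definition coef f (i j k : nat) : K :=
  if [&& i < N, j < N & k < N]%N then f (inord i) (inord j) (inord k) else 0.

Definition rmulmx f (c : 'I_N) : 'M[K]_N := \matrix_(a, k) f a c k.

Lemma coefE f (a b c : 'I_N) : coef f a b c = f a b c.
Proof. by rewrite /coef !ltn_ord !inord_val. Qed.

Lemma xbE (i a : 'I_N) : xb K i 0 a = (a == i)%:R.
Proof. by rewrite mxE eqxx. Qed.

Lemma bil_xbr f u c : bil f u (xb K c) = u *m rmulmx f c.
Proof.
apply/rowP => k; rewrite !mxE summxE; apply: eq_bigr => a _.
rewrite summxE (bigD1 c) //= big1 => [|b ne_bc]; last first.
  by rewrite xbE (negbTE ne_bc) mulr0 scale0r mxE.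
by rewrite xbE eqxx mulr1 addr0 !mxE.
Qed.

Lemma bil_xb f a c : bil f (xb K a) (xb K c) = row a (rmulmx f c).
Proof. by rewrite bil_xbr rowE. Qed.

Lemma bil0r f u : bil f u 0 = 0.
Proof.
apply/rowP => k; rewrite /bil !summxE big1 ?mxE // => a _.
by rewrite summxE big1 // => b _; rewrite !mxE mulr0 mul0r.
Qed.

Lemma bilZr f u w v : bil f u (w *: v) = w *: bil f u v.
Proof.
apply/rowP => k; rewrite [RHS]mxE /bil !summxE mulr_sumr; apply: eq_bigr => a _.
rewrite !summxE mulr_sumr; apply: eq_bigr => b _; rewrite !mxE; ring.
Qed.

Lemma epsE (b : 'rV[K]_N) : eps b = b 0 ord0.
Proof. by rewrite /eps (big_pred1 (@ord0 m)) // => i; rewrite -val_eqE. Qed.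

Lemma tensE (u v : 'rV[K]_N) k l : tens u v k l = u 0 k * v 0 l.
Proof. by rewrite /tens mxE big_ord1 mxE. Qed.

Lemma DeltaCE (c : 'rV[K]_N) (k l : 'I_N) :
  DeltaC c k l = if (k + l < N)%N then c 0 (inord (k + l)) else 0.
Proof.
have entry t : (\sum_(u < N) \sum_(v < N | (u + v == t)%N) delta_mx u v : 'M[K]_N) k l =
               ((k + l)%N == t)%:R.
  rewrite summxE (big_ord_only1 (t := k)) => [|u ne_uk]; last first.
    by rewrite summxE big1 // => v _; rewrite mxE (eq_sym k) (negbTE ne_uk).
  rewrite summxE big_mkcond (big_ord_only1 (t := l)) => [|v ne_vl]; last first.
    by case: ifP => // _; rewrite mxE (eq_sym l) (negbTE ne_vl) andbF.
  by case: ifP => _; rewrite ?mxE ?eqxx.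
rewrite /DeltaC summxE (eq_bigr (fun t => c 0 t * ((k + l)%N == t)%:R)) => [|t _]; last first.
  by rewrite mxE entry.
case: ifP => [lt_klN|/negbT le_Nkl].
  rewrite (bigD1 (inord (k + l))) //= inordK // eqxx mulr1 big1 ?addr0 // => t ne_t.
  suff -> : ((k + l)%N == t) = false by rewrite mulr0.
  by apply: contraNF ne_t => /eqP klt; apply/eqP/val_inj; rewrite /= inordK.
rewrite big1 // => t _; case: eqP => [klt|]; last by rewrite mulr0.
by move: le_Nkl; rewrite klt ltn_ord.
Qed.

Lemma coef_of_coalg_mor f : coalg_mor f -> coalg_mor_coef N (coef f).
Proof.
move=> f_mor; split => [i j k l lt_iN lt_jN lt_kN lt_lN|i j|i j k le_Nk]; last first.
- by rewrite /coef (ltnNge k) le_Nk !andbF.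
- have [lt_iN|le_Ni] := ltnP i N; last by rewrite /coef (ltnNge i) le_Ni; case: i le_Ni.
  have [lt_jN|le_Nj] := ltnP j N; last first.
    by rewrite /coef (ltnNge j) le_Nj andbF; case: j le_Nj => // j _; rewrite andbF.
  have [_] := f_mor (inord i) (inord j).
  rewrite !epsE bil_xb !mxE /coef lt_iN lt_jN /= -!(inj_eq val_inj) /= !inordK //.
  have -> : inord 0 = ord0 :> 'I_N by apply: val_inj; rewrite /= inordK.
  by move=> ->; rewrite eq_sym [j == _]eq_sym -natrM mulnb.
have [comul _] := f_mor (inord i) (inord j).
have := congr1 (fun M : 'M_N => M (inord k) (inord l)) comul; rewrite /= DeltaCE !inordK //.
rewrite bil_xb.
have -> : (if (k + l < N)%N then row (inord i) (rmulmx f (inord j)) 0 (inord (k + l)) else 0)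
          = coef f i j (k + l).
  by rewrite /coef lt_iN lt_jN; case: ifP; rewrite ?mxE.
move=> ->; rewrite summxE.
transitivity (\sum_(a < N) \sum_(b < N | (a + b == i)%N)
   \sum_(c < N) \sum_(d < N | (c + d == j)%N) coef f a c k * coef f b d l).
  apply: eq_bigr => a _; rewrite summxE; apply: eq_bigr => b _.
  rewrite summxE; apply: eq_bigr => c _; rewrite summxE; apply: eq_bigr => d _.
  by rewrite tensE !bil_xb !mxE -(coefE f a c) -(coefE f b d) !inordK.
rewrite (sum_antidiagonal (fun a b => \sum_(c < N) \sum_(d < N | (c + d == j)%N)
                                       coef f a c k * coef f b d l)) //.
by apply: eq_bigr => a _; rewrite (sum_antidiagonal (fun c d => coef f a c k * coef f (i - a) d l)).
Qed.

Lemma eps_xb0 : eps (xb K (@ord0 m)) = 1 :> K.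
Proof. by rewrite epsE xbE eqxx. Qed.

Lemma sw_xb (c : 'I_N) G :
  sw (xb K c) G = \sum_(s < N) \sum_(t < N | (s + t == c)%N) G (xb K s) (xb K t).
Proof.
rewrite /sw (big_ord_only1 (t := c)) => [|a ne_ac]; last by rewrite xbE (negbTE ne_ac) scale0r.
by rewrite xbE eqxx scale1r.
Qed.

Lemma sw_xb0 G : sw (xb K (@ord0 m)) G = G (xb K (@ord0 m)) (xb K (@ord0 m)).
Proof.
rewrite sw_xb (big_ord_only1 (t := @ord0 m)) => [|s ne_s0]; last first.
  by rewrite big_pred0 // => t; apply: contraNF ne_s0; rewrite -val_eqE /=; lia.
by rewrite (big_pred1 (@ord0 m)) // => t; rewrite -val_eqE /=.
Qed.

Lemma rmulmx0_trig f : coalg_mor f -> is_trig_mx (rmulmx f (@ord0 m)).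
Proof.
move=> /coef_of_coalg_mor f_mor; apply/is_trig_mxP => a k lt_ak.
by rewrite mxE -coefE (coef_eq0_lt f_mor) //= addn0.
Qed.

Lemma row_rmulmx00 f : coalg_mor f -> row (@ord0 m) (rmulmx f (@ord0 m)) = xb K ord0.
Proof.
move=> /coef_of_coalg_mor f_mor; apply/rowP => k; rewrite xbE !mxE -coefE -val_eqE /=.
have [->|k_gt0] := posnP k; first by rewrite (coef_counit f_mor).
by rewrite (coef_eq0_lt f_mor) // eqn0Ngt k_gt0.
Qed.

End Coordinates.

Section QCycle.
Variables (K : fieldType) (m : nat).
Local Notation N := m.+2.
Local Notation o0 := (@ord0 m.+1).
Local Notation o1 := (@Ordinal N 1 isT).
Local Notation x0 := (xb K o0).
Local Notation x1 := (xb K o1).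
Implicit Types f g h p d : 'I_N -> 'I_N -> 'I_N -> K.

Lemma sw_xb1 G : sw x1 G = G x0 x1 + G x1 x0.
Proof.
rewrite sw_xb (big_ord_two (i := o0) (j := o1)) // => [|s ne_s0 ne_s1]; last first.
  rewrite big_pred0 // => t; apply/negbTE/negP => /eqP.
  by move: ne_s0 ne_s1; rewrite -!val_eqE /=; lia.
rewrite (big_pred1 o1) => [|t]; last by rewrite /= -val_eqE.
by rewrite (big_pred1 o0) => [|t]; last by rewrite /= -val_eqE /=.
Qed.

Lemma rmulmx1_trig f : coalg_mor f -> f o0 o1 o1 = 0 -> is_trig_mx (rmulmx f o1).
Proof.
move=> /coef_of_coalg_mor f_mor; rewrite -coefE => beta0.
by apply/is_trig_mxP => a k lt_ak; rewrite mxE -coefE (coef_below_diag1 f_mor beta0).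
Qed.

Lemma row_rmulmx01 f : coalg_mor f -> f o0 o1 o1 = 0 -> row o0 (rmulmx f o1) = 0.
Proof.
move=> /coef_of_coalg_mor f_mor; rewrite -coefE => beta0.
apply/rowP => k; rewrite !mxE -coefE /=.
have [->|k_gt0] := posnP k; first by rewrite (coef_counit f_mor).
by rewrite (coef_below_diag1 f_mor beta0).
Qed.

Lemma row_rmulmx10 f : coalg_mor f -> row o1 (rmulmx f o0) = f o1 o0 o1 *: x1.
Proof.
move=> /coef_of_coalg_mor f_mor; apply/rowP => k; rewrite [RHS]mxE xbE !mxE -!coefE -val_eqE /=.
case: k => [[|[|k]] lt_kN] /=; first by rewrite (coef_counit f_mor) mulr0.
  by rewrite mulr1.
by rewrite (coef_eq0_lt f_mor) ?mulr0.
Qed.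

Lemma coalg_mor_beta0 f : [pchar K] =i pred0 -> coalg_mor f ->
  f o1 o0 o1 != 0 -> f o0 o1 o1 = 0.
Proof.
move=> /pcharf0P charK0 /coef_of_coalg_mor f_mor; rewrite -!coefE.
by apply: (coef_beta_eq0 f_mor); rewrite charK0.
Qed.

Lemma rmulmx0_diag f k : coalg_mor f -> rmulmx f o0 k k = f o1 o0 o1 ^+ k.
Proof. by move=> /coef_of_coalg_mor f_mor; rewrite mxE -!coefE (coef_diag0 f_mor). Qed.

Lemma rmulmx1_diag f k : coalg_mor f -> f o0 o1 o1 = 0 ->
  rmulmx f o1 k k = k%:R * f o1 o0 o1 ^+ k.-1 * f o1 o1 o1.
Proof.
move=> /coef_of_coalg_mor f_mor; rewrite -coefE => beta0.
by rewrite mxE -!coefE (coef_diag1 f_mor beta0).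
Qed.

Lemma rmulmx0_mul_unit f g : coalg_mor f -> coalg_mor g ->
  x1 *m rmulmx f o0 *m rmulmx g o0 = x1 -> f o1 o0 o1 * g o1 o0 o1 = 1.
Proof.
move=> f_mor g_mor /(congr1 (fun v : 'rV_N => v 0 o1)) /=.
rewrite [RHS]xbE eqxx -mulmxA -rowE mxE trig_mulmx_diag ?rmulmx0_trig //.
by rewrite !mxE.
Qed.

Lemma rmulmx_commutation f g h : coalg_mor f -> coalg_mor h -> h o0 o1 o1 = 0 ->
  (forall v, sw x1 (fun b1 b2 => bil f (bil g v b1) (bil h x0 b2)) =
             sw x0 (fun c1 c2 => bil g (bil f v c2) (bil f x1 c1))) ->
  rmulmx g o1 *m rmulmx f o0 = f o1 o0 o1 *: (rmulmx f o0 *m rmulmx g o1).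
Proof.
move=> f_mor h_mor beta_h cycle; apply/row_matrixP => r.
have := cycle (xb K r); rewrite sw_xb1 sw_xb0 !bil_xb.
rewrite row_rmulmx01 // row_rmulmx00 // row_rmulmx10 // bil0r add0r bilZr !bil_xbr.
by rewrite !rowE -scalemxAr !mulmxA.
Qed.

Lemma rmulmx_scaled_commute_alpha1 p f : coalg_mor p -> coalg_mor f -> p o0 o1 o1 = 0 ->
  p o1 o1 o1 != 0 -> f o1 o0 o1 != 0 ->
  rmulmx p o1 *m rmulmx f o0 = f o1 o0 o1 *: (rmulmx f o0 *m rmulmx p o1) ->
  f o1 o0 o1 = 1.
Proof.
move=> p_mor f_mor beta_p gamma_nz alpha_nz.
move/(trig_scaled_commute_eq1 (i := o1)); apply; rewrite ?rmulmx1_trig ?rmulmx0_trig //.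
by rewrite rmulmx1_diag // rmulmx0_diag //= mul1r expr0 mul1r expr1 mulf_neq0.
Qed.

Lemma rmulmx0_commute_diag p f : [pchar K] =i pred0 -> coalg_mor p -> coalg_mor f ->
  p o0 o1 o1 = 0 -> p o1 o1 o1 != 0 -> p o1 o0 o1 = 1 -> f o1 o0 o1 = 1 ->
  rmulmx p o1 *m rmulmx f o0 = rmulmx f o0 *m rmulmx p o1 -> is_diag_mx (rmulmx f o0).
Proof.
move=> charK0 p_mor f_mor beta_p gamma_nz alpha_p1 alpha_f1 comm.
apply: (trig_commute_is_diag (rmulmx0_trig f_mor) (rmulmx1_trig p_mor beta_p)) => [|i j|i j].
- by rewrite comm.
- by rewrite !rmulmx0_diag // alpha_f1 !expr1n.
rewrite !rmulmx1_diag // alpha_p1 !expr1n !mulr1 => /(mulIf gamma_nz).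
by move=> /(pchar0_natr_inj charK0)/val_inj.
Qed.

Lemma qcycle_rmulmx0_diag p d : [pchar K] =i pred0 -> regular_qcycle p d ->
  p o1 o1 o1 != 0 -> is_diag_mx (rmulmx p o0) /\ is_diag_mx (rmulmx d o0).
Proof.
move=> charK0 [[p_mor [d_mor [up [lo [up_mor [lo_mor regular]]]]]] cycle] gamma_nz.
have [_ alpha_p_nz] : up o1 o0 o1 != 0 /\ p o1 o0 o1 != 0.
  apply/andP; rewrite -negb_or -mulf_eq0 rmulmx0_mul_unit ?oner_neq0 //.
  by have [+ _] := regular x1 x0; rewrite sw_xb0 eps_xb0 scale1r !bil_xbr.
have [alpha_d_nz _] : d o1 o0 o1 != 0 /\ lo o1 o0 o1 != 0.
  apply/andP; rewrite -negb_or -mulf_eq0 rmulmx0_mul_unit ?oner_neq0 //.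
  by have [_ [_ [+ _]]] := regular x1 x0; rewrite sw_xb0 eps_xb0 scale1r !bil_xbr.
have beta_p := coalg_mor_beta0 charK0 p_mor alpha_p_nz.
have beta_d := coalg_mor_beta0 charK0 d_mor alpha_d_nz.
have comm_p := rmulmx_commutation p_mor d_mor beta_d (fun v => (cycle v x1 x0).1).
have comm_d := rmulmx_commutation d_mor p_mor beta_p (fun v => (cycle v x1 x0).2.1).
have alpha_p1 := rmulmx_scaled_commute_alpha1 p_mor p_mor beta_p gamma_nz alpha_p_nz comm_p.
have alpha_d1 := rmulmx_scaled_commute_alpha1 p_mor d_mor beta_p gamma_nz alpha_d_nz comm_d.
split; apply: rmulmx0_commute_diag => //.
  by rewrite comm_p alpha_p1 scale1r.
by rewrite comm_d alpha_d1 scale1r.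
Qed.

End QCycle.

Unset Implicit Arguments.

Theorem proposition4p1 (K : closedFieldType) (n : nat)
  (p d : 'I_n -> 'I_n -> 'I_n -> K) :
  [pchar K] =i pred0 ->
  (2 <= n)%N ->
  regular_qcycle p d ->
  (forall o : 'I_n, val o = 1%N -> p o o o != 0) ->
  forall (i j z : 'I_n), val z = 0%N -> (val i < val j)%N ->
    d j z i = 0 /\ p j z i = 0.
Proof.
case: n p d => [|[|m]] // p d charK0 _ qcycle gamma_nz i j z z0 lt_ij.
have -> : z = ord0 by apply: val_inj.
have [/is_diag_mxP diag_p /is_diag_mxP diag_d] :=
  qcycle_rmulmx0_diag charK0 qcycle (gamma_nz (Ordinal (isT : 1 < m.+2)%N) erefl).
have ne_ji : j != i by rewrite -val_eqE neq_ltn lt_ij orbT.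
by move: (diag_d j i ne_ji) (diag_p j i ne_ji); rewrite !mxE.
Qed.
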